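(* Let $n\ge3$, $k\ge1$ be integers, $\alpha=n/2-1$, let $b>0>c$ satisfy $$bc=-\frac{(k+1)k(\alpha+k-1)}{(2\alpha+k)(2\alpha+k-1)(\alpha+k+1)},\qquad b+c=-\frac{2\alpha(k+1)^2(\alpha+k-1)}{(2\alpha+k)(2\alpha+k-1)(\alpha+2k+1)},$$ and let $\beta_1<\dots<\beta_{k+1}$ be the zeros of $P_{k+1}^{(n)}(t)+bP_{k-1}^{(n)}(t)$. Then the polynomial $g_k(t)=(t-\beta_1)(t-\beta_2)\cdots(t-\beta_k)$ has all Gegenbauer coefficients positive, i.e. $g_k=\sum_{i=0}^kc_iP_i^{(n)}$ with $c_i>0$ for $i=0,\dots,k$.
   Context: $P_i^{(n)}$ is the Gegenbauer polynomial of degree $i$ (Jacobi polynomial with parameters $(n-3)/2,(n-3)/2$, normalized $P_i^{(n)}(1)=1$). *)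

From HB Require Import structures.
From mathcomp Require Import all_boot all_order all_algebra.
Set Implicit Arguments. Unset Strict Implicit. Unset Printing Implicit Defensive.
Import Order.TTheory GRing.Theory Num.Theory.
Local Open Scope ring_scope.

(* Normalized Gegenbauer polynomials P_i^(n) (P_i(1) = 1), i.e. Jacobi
   polynomials with parameters ((n-3)/2,(n-3)/2) normalized at 1, defined by
   the standard three-term recurrence
     P_0 = 1, P_1 = t,
     (m+n-2) P_{m+1} = (2m+n-2) t P_m - m P_{m-1}.
   gegen_pair n i = (P_i, P_{i+1}). *)
Fixpoint gegen_pair (R : fieldType) (n i : nat) : {poly R} * {poly R} :=
  match i with
  | 0 => (1, 'X)
  | i'.+1 =>
      let: (p, q) := gegen_pair R n i' in
      let m := i'.+1 in
      (q, ((m + n - 2)%N%:R)^-1 *: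
            ((2 * m + n - 2)%N%:R *: ('X * q) - m%:R *: p))
  end.

Definition gegen (R : fieldType) (n i : nat) : {poly R} := (gegen_pair R n i).1.

From HB Require Import structures.
From mathcomp Require Import all_boot all_order all_algebra.
From mathcomp Require Import ring lra zify.
From mathcomp Require Import polyrcf.
Set Implicit Arguments. Unset Strict Implicit. Unset Printing Implicit Defensive.
Import Order.TTheory GRing.Theory Num.Theory.
Local Open Scope ring_scope.

(* Let [f = P_(k+1) + b P_(k-1)] and [s = beta_(k+1)], so that
   [f = lc f (t - s) g_k].  The Christoffel-Darboux identity for the pair
   [(P_k, f)] reads [f(t) P_k(s) - P_k(t) f(s) = c (t - s) \sum_(i <= k)
   w_i P_i(s) P_i(t)] with [c > 0], and the weights [w_i] are positive as soon
   as [b A_k / C_k < 1], which is what the hypotheses on [b] and [c] give.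
   Since [f(s) = 0], cancelling [t - s] makes [g_k] a positive multiple of
   [\sum_i w_i P_i(s) P_i], so it remains to see [P_i(s) > 0] for [i <= k].
   The same identities make the Wronskians [W(P_k, f)] and [W(P_i, P_(i+1))]
   positive; a polynomial with positive leading coefficient and positive
   Wronskian against a function that is nonnegative on [[s, +oo[] cannot
   vanish there.  This carries positivity from [f] down to [P_0]. *)

Definition wronskian (R : nzRingType) (p q : {poly R}) : {poly R} :=
  p * q^`() - p^`() * q.

Lemma horner_wronskian (R : comNzRingType) (c s : R) (p q T : {poly R}) :
  c *: (q * (p.[s])%:P - p * (q.[s])%:P) = ('X - s%:P) * T ->
  c * (wronskian p q).[s] = T.[s].
Proof.
move=> /(congr1 (fun r => (deriv r).[s])).
rewrite derivZ derivB !derivM !derivC derivXsubC !hornerE /=.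
by rewrite subrr !mul0r !addr0 => <-; ring.
Qed.

Section WronskianSign.
Variable R : rcfType.
Implicit Types (p q : {poly R}) (x y : R).

Lemma largest_root p x : p != 0 ->
  {in `[x, +oo[, forall z, ~~ root p z} \/
  exists2 y, x <= y & root p y /\ {in `]y, +oo[, forall z, ~~ root p z}.
Proof.
move=> p_neq0; pose M := Num.max x (cauchy_bound p) + 1.
have beyond z : M <= z -> ~~ root p z.
  move=> Mz; apply: (ge_cauchy_bound p_neq0); rewrite in_itv /= andbT.
  have : cauchy_bound p <= Num.max x (cauchy_bound p) by rewrite le_max lexx orbT.
  by rewrite /M in Mz; lra.
have x_lt_M : x < M.
  have : x <= Num.max x (cauchy_bound p) by rewrite le_max lexx.
  by rewrite /M; lra.
case: (prev_rootP p (x - 1) M) => [p0|y _ py0 y_in noroot_yM|_ _ _ noroot_xM].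
- by rewrite p0 eqxx in p_neq0.
- have noroot_y : {in `]y, +oo[, forall z, ~~ root p z}.
    move=> z; rewrite in_itv /= andbT => yz.
    by have [zM|/beyond//] := ltP z M; apply: noroot_yM; rewrite in_itv /= yz.
  have [y_lt_x|x_le_y] := ltP y x; last by right; exists y; [|split=> //; apply/rootP].
  left=> z; rewrite in_itv /= andbT => xz; apply: noroot_y.
  by rewrite in_itv /= andbT (lt_le_trans y_lt_x).
- left=> z; rewrite in_itv /= andbT => xz.
  have [zM|/beyond//] := ltP z M; apply: noroot_xM.
  by rewrite in_itv /= zM andbT; lra.
Qed.

Lemma deriv_ge0_at_largest_root p y : 0 < lead_coef p -> root p y ->
  {in `]y, +oo[, forall z, ~~ root p z} -> 0 <= p^`().[y].
Proof.
move=> lead_gt0 py noroot_y; rewrite leNgt; apply/negP => dp_lt0.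
have p_neq0 : p != 0 by rewrite -lead_coef_eq0 gt_eqF.
have [z z_in] := neighpr_wit (ltr_pwDr ltr01 (lexx y)) p_neq0.
have y_lt_z : y < z by rewrite (itvP z_in).
have right_of_y := sgr_neighpr z_in.
rewrite sgp_right_deriv // sgp_rightNroot ?rootE ?lt_eqF //
  (ltr0_sg dp_lt0) in right_of_y.
have noroot_z : {in `[z, +oo[, forall u, ~~ root p u}.
  move=> u; rewrite in_itv /= andbT => zu; apply: noroot_y.
  by rewrite in_itv /= (lt_le_trans y_lt_z).
have := @sgp_pinftyP _ z p noroot_z z; rewrite in_itv /= lexx right_of_y.
by rewrite /sgp_pinfty (gtr0_sg lead_gt0) => /(_ isT); lra.
Qed.

(* At a root [y] of [p] the Wronskian is [- p'(y) q(y)], so [p] would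
   decrease through its largest root in [[x, +oo[]. *)
Lemma wronskian_gt0_right p q x : 0 < lead_coef p ->
  (forall y, x <= y -> 0 <= q.[y]) ->
  (forall y, x <= y -> 0 < (wronskian p q).[y]) ->
  forall y, x <= y -> 0 < p.[y].
Proof.
move=> lead_gt0 q_ge0 W_gt0.
have p_neq0 : p != 0 by rewrite -lead_coef_eq0 gt_eqF.
have [noroot_x|[y x_le_y [py noroot_y]]] := largest_root x p_neq0.
  move=> y x_le_y; have := @sgp_pinftyP _ x p noroot_x y.
  rewrite in_itv /= x_le_y /sgp_pinfty (gtr0_sg lead_gt0) => /(_ isT) /eqP.
  by rewrite sgr_cp0.
have := W_gt0 y x_le_y; rewrite /wronskian !hornerE (rootP py) mul0r sub0r.
rewrite oppr_gt0 ltNge mulr_ge0 //; first exact: deriv_ge0_at_largest_root.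
exact: q_ge0.
Qed.

End WronskianSign.

Section ThreeTermRecurrence.
Variable R : fieldType.
Variables (P : nat -> {poly R}) (A C : nat -> R).
Hypotheses (P0 : P 0 = 1) (P1 : A 0 *: P 1 = 'X).
Hypothesis PS : forall m, A m.+1 *: P m.+2 = 'X * P m.+1 - C m.+1 *: P m.
Hypothesis A_neq0 : forall m, A m != 0.
Hypothesis C_neq0 : forall m, C m.+1 != 0.

Let P1E : P 1 = (A 0)^-1 *: 'X.
Proof. by rewrite -P1 scalerK. Qed.

Let PSE m : P m.+2 = (A m.+1)^-1 *: ('X * P m.+1 - C m.+1 *: P m).
Proof. by rewrite -PS scalerK. Qed.

Let size_lower m : size (P m) = m.+1 -> (size (- (C m.+1 *: P m)) < m.+3)%N.
Proof.
by move=> sizem; rewrite size_polyN (leq_ltn_trans (size_scale_leq _ _)) ?sizem.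
Qed.

Lemma size_P m : size (P m) = m.+1.
Proof.
suff: size (P m) = m.+1 /\ size (P m.+1) = m.+2 by case.
elim: m => [|m [sizem sizeS]].
  by rewrite P0 P1E size_poly1 size_scale ?invr_eq0 // size_polyX.
split=> //; rewrite PSE size_scale ?invr_eq0 // size_polyDl mulrC size_mulX;
  by rewrite -?size_poly_gt0 ?sizeS ?size_lower.
Qed.

Lemma lead_coef_PS m : lead_coef (P m.+1) = lead_coef (P m) / A m.
Proof.
case: m => [|m]; first by rewrite P1E P0 lead_coefZ lead_coefX lead_coef1 mulr1 mul1r.
rewrite PSE lead_coefZ lead_coefDl (mulrC 'X) ?lead_coefMX 1?mulrC //.
by rewrite (mulrC 'X) size_mulX -?size_poly_gt0 size_P // size_lower ?size_P.
Qed.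

(* [cd_weight m] plays the role of [1 / ||P m||^2]: it makes the
   Christoffel-Darboux sum telescope. *)
Fixpoint cd_weight m : R :=
  if m is m'.+1 then cd_weight m' * A m' / C m else 1.
Arguments cd_weight : simpl never.

Definition cd_kernel (w : nat -> R) j (s : R) : {poly R} :=
  \sum_(i < j.+1) (w i * (P i).[s]) *: P i.

Lemma cd_weightS m : cd_weight m.+1 * C m.+1 = cd_weight m * A m.
Proof. exact: divfK. Qed.

Lemma christoffel_darboux j s :
  (A j * cd_weight j) *: (P j.+1 * ((P j).[s])%:P - P j * ((P j.+1).[s])%:P) =
  ('X - s%:P) * cd_kernel cd_weight j s.
Proof.
elim: j => [|j IH].
  have P1s : A 0 * (P 1).[s] = s by rewrite -hornerZ P1 hornerX.
  have P0s : (P 0).[s] = 1 by rewrite P0 -polyC1 hornerC.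
  rewrite /cd_kernel big_ord1 /= P0s P0 polyC1 !mulr1 mul1r scale1r mulr1.
  by rewrite scalerBr P1 -mul_polyC -polyCM P1s.
have PSs : A j.+1 * (P j.+2).[s] = s * (P j.+1).[s] - C j.+1 * (P j).[s].
  by rewrite -(hornerZ (A j.+1)) PS !hornerE.
rewrite /cd_kernel big_ord_recr /= -/(cd_kernel cd_weight j s) mulrDr -IH.
move: (cd_weight j.+1) (cd_weightS j) => w' wS.
set P0s := (P j).[s]; set P1s := (P j.+1).[s]; set P2s := (P j.+2).[s] in PSs *.
rewrite -!mul_polyC !polyCM.
transitivity (w'%:P * (P1s%:P * ((A j.+1)%:P * P j.+2) - P j.+1 * (A j.+1 * P2s)%:P)).
  by rewrite polyCM; ring.
rewrite (mul_polyC (A j.+1)) PS PSs -mul_polyC polyCB !polyCM.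
transitivity ((w' * C j.+1)%:P * (P j.+1 * P0s%:P - P j * P1s%:P) +
              ('X - s%:P) * (w'%:P * P1s%:P * P j.+1)).
  by rewrite polyCM; ring.
by rewrite wS polyCM; ring.
Qed.

Lemma cd_kernel_perturb w j s r :
  cd_kernel w j.+1 s - r *: cd_kernel w j s =
  cd_kernel (fun i => (if (i < j.+1)%N then 1 - r else 1) * w i) j.+1 s.
Proof.
rewrite /cd_kernel big_ord_recr [RHS]big_ord_recr /= ltnn mul1r scaler_sumr.
rewrite addrAC -sumrB; congr (_ + _); apply: eq_bigr => i _.
by rewrite ltn_ord scalerA -scalerBl; congr (_ *: _); ring.
Qed.

Definition perturbed_weight b j i : R :=
  (if (i < j.+1)%N then 1 - b * (A j.+1 / C j.+1) else 1) * cd_weight i.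

Lemma christoffel_darboux_perturbed j b s :
  let f := P j.+2 + b *: P j in
  (A j.+1 * cd_weight j.+1) *: (f * ((P j.+1).[s])%:P - P j.+1 * (f.[s])%:P) =
  ('X - s%:P) * cd_kernel (perturbed_weight b j) j.+1 s.
Proof.
move=> f; rewrite hornerD hornerZ.
have weight_ratio : A j.+1 * cd_weight j.+1 * b =
    b * (A j.+1 / C j.+1) * (A j * cd_weight j).
  by rewrite [A j * _]mulrC -cd_weightS; field; exact: C_neq0.
have -> : f * ((P j.+1).[s])%:P - P j.+1 * ((P j.+2).[s] + b * (P j).[s])%:P =
    (P j.+2 * ((P j.+1).[s])%:P - P j.+1 * ((P j.+2).[s])%:P) -
    b *: (P j.+1 * ((P j).[s])%:P - P j * ((P j.+1).[s])%:P).
  by rewrite /f -!mul_polyC polyCD polyCM; ring.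
rewrite scalerBr scalerA weight_ratio -(scalerA (b * _)) !christoffel_darboux.
by rewrite /perturbed_weight -cd_kernel_perturb mulrBr scalerAr.
Qed.

Lemma cd_kernel_perturbed_quotient j b s (g : {poly R}) :
  P j.+2 + b *: P j = ('X - s%:P) * g ->
  (A j.+1 * cd_weight j.+1 * (P j.+1).[s]) *: g =
  cd_kernel (perturbed_weight b j) j.+1 s.
Proof.
move=> f_eq; have := christoffel_darboux_perturbed j b s.
rewrite /= f_eq hornerM hornerXsubC subrr mul0r polyC0 mulr0 subr0 => cd.
have Xs_neq0 : 'X - s%:P != 0 by rewrite polyXsubC_eq0.
apply: (mulfI Xs_neq0); rewrite -cd.
set c := A j.+1 * cd_weight j.+1.
by rewrite -!mul_polyC polyCM; ring.
Qed.

End ThreeTermRecurrence.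

Lemma cd_kernel_horner_gt0 (R : realFieldType) (P : nat -> {poly R}) w j s :
  P 0 = 1 -> 0 < w 0 -> (forall i, 0 <= w i) -> 0 < (cd_kernel P w j s).[s].
Proof.
move=> P0 w0_gt0 w_ge0; rewrite /cd_kernel horner_sum big_ord_recl /= P0.
rewrite hornerZ -polyC1 hornerC !mulr1; apply: ltr_wpDr => //; apply: sumr_ge0 => i _.
by rewrite hornerZ -mulrA mulr_ge0 // -expr2 sqr_ge0.
Qed.

Lemma poly_prod_increasing_roots (R : numFieldType) m (f : {poly R})
    (beta : 'I_m -> R) :
  size f = m.+1 -> (forall i j : 'I_m, (i < j)%N -> beta i < beta j) ->
  (forall i, root f (beta i)) ->
  f = lead_coef f *: \prod_(i < m) ('X - (beta i)%:P).
Proof.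
move=> size_f beta_incr roots_f.
have beta_inj : injective beta.
  move=> i j eq_ij; apply/val_inj/eqP; apply: contraT; rewrite neq_ltn.
  by case/orP => /beta_incr; rewrite eq_ij ltxx.
have := @all_roots_prod_XsubC _ f [seq beta i | i <- enum 'I_m].
rewrite size_map size_enum_ord big_map big_enum /=; apply=> //.
  by apply/allP => z /mapP[i _ ->].
by rewrite uniq_rootsE map_inj_uniq ?enum_uniq.
Qed.

Section PositiveRecurrence.
Variable R : rcfType.
Variables (P : nat -> {poly R}) (A C : nat -> R).
Hypotheses (P0 : P 0 = 1) (P1 : A 0 *: P 1 = 'X).
Hypothesis PS : forall m, A m.+1 *: P m.+2 = 'X * P m.+1 - C m.+1 *: P m.
Hypothesis A_gt0 : forall m, 0 < A m.
Hypothesis C_gt0 : forall m, 0 < C m.+1.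

Let A_neq0 m : A m != 0 := lt0r_neq0 (A_gt0 m).
Let C_neq0 m : C m.+1 != 0 := lt0r_neq0 (C_gt0 m).

Lemma cd_weight_gt0 m : 0 < cd_weight A C m.
Proof.
elim: m => [|m IH]; first exact: ltr01.
by rewrite divr_gt0 ?mulr_gt0.
Qed.

Lemma lead_coef_P_gt0 m : 0 < lead_coef (P m).
Proof.
elim: m => [|m IH]; first by rewrite P0 lead_coef1 ltr01.
by rewrite (lead_coef_PS P0 P1 PS A_neq0) divr_gt0.
Qed.

Lemma wronskian_P_gt0 j x : 0 < (wronskian (P j) (P j.+1)).[x].
Proof.
have /horner_wronskian := christoffel_darboux P0 P1 PS C_neq0 j x.
have pos_kernel := cd_kernel_horner_gt0 j x P0 (cd_weight_gt0 0)
  (fun i => ltW (cd_weight_gt0 i)).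
by move=> eq; move: pos_kernel; rewrite -eq pmulr_rgt0 // mulr_gt0 ?cd_weight_gt0.
Qed.

Lemma perturbed_weight_gt0 b j : b * (A j.+1 / C j.+1) < 1 ->
  forall i, 0 < perturbed_weight A C b j i.
Proof.
move=> r_lt1 i; rewrite /perturbed_weight.
by case: ifP => _; rewrite mulr_gt0 ?cd_weight_gt0 ?subr_gt0.
Qed.

Lemma wronskian_perturbed_gt0 j b x : b * (A j.+1 / C j.+1) < 1 ->
  0 < (wronskian (P j.+1) (P j.+2 + b *: P j)).[x].
Proof.
move=> r_lt1.
have /horner_wronskian := christoffel_darboux_perturbed P0 P1 PS C_neq0 j b x.
have pos_kernel := cd_kernel_horner_gt0 j.+1 x P0 (perturbed_weight_gt0 r_lt1 0)
  (fun i => ltW (perturbed_weight_gt0 r_lt1 i)).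
by move=> eq; move: pos_kernel; rewrite -eq pmulr_rgt0 // mulr_gt0 ?cd_weight_gt0.
Qed.

Lemma P_gt0_right_of x j : (forall y, x <= y -> 0 < (P j).[y]) ->
  forall m, (m <= j)%N -> forall y, x <= y -> 0 < (P m).[y].
Proof.
elim: j => [|j IH] Pj_gt0 m; first by rewrite leqn0 => /eqP ->.
rewrite leq_eqVlt ltnS => /orP[/eqP -> //|m_le_j]; apply: IH m_le_j.
apply: wronskian_gt0_right (lead_coef_P_gt0 j) _ (fun y _ => wronskian_P_gt0 j y).
by move=> y /Pj_gt0 /ltW.
Qed.

Theorem perturbed_quotient_coef_gt0 j b (beta : 'I_j.+2 -> R) :
  b * (A j.+1 / C j.+1) < 1 ->
  (forall i i' : 'I_j.+2, (i < i')%N -> beta i < beta i') ->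
  (forall i, root (P j.+2 + b *: P j) (beta i)) ->
  exists d : 'I_j.+2 -> R, (forall i, 0 < d i) /\
    \prod_(i < j.+1) ('X - (beta (inord i))%:P) = \sum_(i < j.+2) d i *: P i.
Proof.
move=> r_lt1 beta_incr; set f := P j.+2 + b *: P j => roots_f.
set g := \prod_(i < j.+1) _; pose s := beta ord_max.
have size_low : (size (b *: P j) < size (P j.+2))%N.
  by rewrite (leq_ltn_trans (size_scale_leq _ _)) // !(size_P P0 P1 PS A_neq0).
have size_f : size f = j.+3 by rewrite size_polyDl // (size_P P0 P1 PS A_neq0).
have lead_f_gt0 : 0 < lead_coef f by rewrite lead_coefDl // lead_coef_P_gt0.
have f_prod := poly_prod_increasing_roots size_f beta_incr roots_f.
have beta_le_s i : beta i <= s.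
  have [->|i_neq] := eqVneq i ord_max; first exact: lexx.
  apply/ltW/beta_incr; rewrite /= ltn_neqAle -ltnS ltn_ord andbT.
  by apply: contra i_neq => /eqP eq_i; apply/eqP/val_inj.
have f_fact : f = ('X - s%:P) * (lead_coef f *: g).
  rewrite {1}f_prod [RHS]mulrC -scalerAl big_ord_recr /=; congr (_ *: (_ * _)).
  apply: eq_bigr => i _; congr ('X - (beta _)%:P); apply: val_inj.
  by rewrite /= inordK // ltnS ltnW.
have f_ge0 y : s <= y -> 0 <= f.[y].
  move=> s_le_y; rewrite f_prod hornerZ horner_prod mulr_ge0 ?(ltW lead_f_gt0) //.
  by apply: prodr_ge0 => i _; rewrite hornerXsubC subr_ge0 (le_trans (beta_le_s i)).
have Pk_gt0 := wronskian_gt0_right (lead_coef_P_gt0 j.+1) f_ge0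
  (fun y _ => wronskian_perturbed_gt0 y r_lt1).
have Ps_gt0 i : (i <= j.+1)%N -> 0 < (P i).[s].
  by move=> le_i; exact: P_gt0_right_of Pk_gt0 i le_i s (lexx s).
have := cd_kernel_perturbed_quotient P0 P1 PS C_neq0 f_fact.
set c := A j.+1 * _ * _ => g_kernel.
have c_gt0 : 0 < c * lead_coef f.
  by rewrite mulr_gt0 // /c mulr_gt0 ?Ps_gt0 // mulr_gt0 ?A_gt0 ?cd_weight_gt0.
exists (fun i => (c * lead_coef f)^-1 * (perturbed_weight A C b j i * (P i).[s])).
split=> [i|].
  by rewrite mulr_gt0 ?invr_gt0 // mulr_gt0 ?perturbed_weight_gt0 ?Ps_gt0 // -ltnS.
rewrite -[g](scalerK (lt0r_neq0 c_gt0)) -(scalerA c) g_kernel scaler_sumr.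
by apply: eq_bigr => i _; rewrite scalerA.
Qed.

End PositiveRecurrence.

(* [(K - b u) (K - c u)] with [u = K + 2 a] only involves [b + c] and [b c];
   it is positive, and so is [K - c u] since [c < 0]. *)
Lemma perturbation_bound (R : realFieldType) (a K b c : R) :
  1 / 2 <= a -> 1 <= K -> 0 < b -> c < 0 ->
  b * c = - ((K + 1) * K * (a + K - 1)) /
          ((2 * a + K) * (2 * a + K - 1) * (a + K + 1)) ->
  b + c = - (2 * a * (K + 1) ^+ 2 * (a + K - 1)) /
          ((2 * a + K) * (2 * a + K - 1) * (a + 2 * K + 1)) ->
  b * (K + 2 * a) < K.
Proof.
move=> a_ge K_ge1 b_gt0 c_lt0 bc_eq bpc_eq.
set u := K + 2 * a.
pose D := (u - 1) * (a + 2 * K + 1) * (a + K + 1).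
have D_gt0 : 0 < D by rewrite /D !mulr_gt0 // /u; lra.
pose B := (1 - a) * (a + 2 * K + 1) + (K + 1) ^+ 2 * (a + K - 1) * (a + K + 1).
have prod_eq : (K - b * u) * (K - c * u) * D = 2 * a * K * B.
  transitivity (K ^+ 2 * D - (b + c) * K * u * D + (b * c) * u ^+ 2 * D); first ring.
  rewrite bpc_eq bc_eq /D /B /u; field.
  by apply/and4P; split; apply: lt0r_neq0; lra.
have B_gt0 : 0 < B.
  have le1 : a + 2 * K + 1 <= (K + 1) * (a + K + 1) by nra.
  have le2 : a <= (K + 1) * (a + K - 1) by nra.
  have : a * (a + 2 * K + 1) <= (K + 1) * (a + K - 1) * ((K + 1) * (a + K + 1)).
    by apply: ler_pM; lra.
  rewrite /B; nra.
have prod_gt0 : 0 < (K - b * u) * (K - c * u).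
  by rewrite -(pmulr_lgt0 _ D_gt0) prod_eq !mulr_gt0 //; lra.
have Kcu_gt0 : 0 < K - c * u by rewrite /u; nra.
by move: prod_gt0; rewrite pmulr_lgt0 // subr_gt0.
Qed.

Definition gegen_A (R : numFieldType) n m : R :=
  (m + n - 2)%N%:R / (2 * m + n - 2)%N%:R.

Definition gegen_C (R : numFieldType) n m : R :=
  m%:R / (2 * m + n - 2)%N%:R.

Section GegenbauerRecurrence.
Variables (R : numFieldType) (n : nat).
Hypothesis n_ge3 : (3 <= n)%N.

Lemma gegen_pairE i : gegen_pair R n i = (gegen R n i, gegen R n i.+1).
Proof. by elim: i => [|i IH] //; rewrite /gegen /= IH. Qed.

Lemma gegen_rec m :
  gegen_A R n m.+1 *: gegen R n m.+2 =
  'X * gegen R n m.+1 - gegen_C R n m.+1 *: gegen R n m.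
Proof.
have den_neq0 : (2 * m.+1 + n - 2)%N%:R != 0 :> R by rewrite pnatr_eq0; lia.
have num_neq0 : (m.+1 + n - 2)%N%:R != 0 :> R by rewrite pnatr_eq0; lia.
rewrite {1}/gegen /= gegen_pairE /= /gegen_A /gegen_C scalerA mulrAC mulfV //.
by rewrite mul1r scalerBr !scalerA mulVf // scale1r [_^-1 * _]mulrC.
Qed.

Lemma gegen_A0 : gegen_A R n 0 *: gegen R n 1 = 'X.
Proof. by rewrite /gegen_A mul2n double0 add0n divff ?scale1r // pnatr_eq0; lia. Qed.

Lemma gegen_A_gt0 m : 0 < gegen_A R n m.
Proof. by rewrite /gegen_A divr_gt0 // ltr0n; lia. Qed.

Lemma gegen_C_gt0 m : 0 < gegen_C R n m.+1.
Proof. by rewrite /gegen_C divr_gt0 // ltr0n; lia. Qed.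

Lemma gegen_AC_ratio k : (0 < k)%N ->
  gegen_A R n k / gegen_C R n k = (k%:R + 2 * (n%:R / 2 - 1)) / k%:R.
Proof.
move=> k_gt0; rewrite /gegen_A /gegen_C natrB; last by lia.
rewrite natrD; field.
by apply/andP; split; rewrite pnatr_eq0; lia.
Qed.

End GegenbauerRecurrence.

Theorem lemma4p13 (R : rcfType) (n k : nat) (b c : R)
  (beta : 'I_k.+1 -> R) :
  (3 <= n)%N -> (1 <= k)%N ->
  let alpha : R := n%:R / 2 - 1 in
  let kr : R := k%:R in
  0 < b -> c < 0 ->
  b * c = - ((kr + 1) * kr * (alpha + kr - 1)) /
            ((2 * alpha + kr) * (2 * alpha + kr - 1) * (alpha + kr + 1)) ->
  b + c = - (2 * alpha * (kr + 1) ^+ 2 * (alpha + kr - 1)) /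
            ((2 * alpha + kr) * (2 * alpha + kr - 1) * (alpha + 2 * kr + 1)) ->
  (forall i j : 'I_k.+1, (i < j)%N -> beta i < beta j) ->
  (forall i : 'I_k.+1, root (gegen R n k.+1 + b *: gegen R n k.-1) (beta i)) ->
  exists d : 'I_k.+1 -> R,
    (forall i, 0 < d i) /\
    \prod_(i < k) ('X - (beta (inord i))%:P) =
      \sum_(i < k.+1) d i *: gegen R n i.
Proof.
move=> n_ge3; case: k beta => [|j] beta // _ alpha kr b_gt0 c_lt0 bc_eq bpc_eq.
move=> beta_incr roots_f.
apply: (perturbed_quotient_coef_gt0 (erefl : gegen R n 0 = 1) (gegen_A0 R n_ge3)
  (gegen_rec R n_ge3) (gegen_A_gt0 R n_ge3) (gegen_C_gt0 R n_ge3) _ beta_incr roots_f).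
have alpha_ge : 1 / 2 <= alpha.
  have : (3 : R) <= n%:R by rewrite ler_nat.
  by rewrite /alpha; lra.
have kr_ge1 : 1 <= kr by rewrite ler1n.
rewrite gegen_AC_ratio // mulrA ltr_pdivrMr ?mul1r; last by lra.
exact: perturbation_bound alpha_ge kr_ge1 b_gt0 c_lt0 bc_eq bpc_eq.
Qed.
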